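(* Let $x_*$ be a feasible point of problem $(\mathcal{P})$ and $p\in\{1,\dots,d+1\}$. A $p$-point alternance exists at $x_*$ if and only if there exist $k_0\in\{1,\dots,p\}$, $i_0\in\{k_0,\dots,p\}$ and vectors $V_1,\dots,V_{k_0}\in\{\nabla_xf(x_*,\omega):\omega\in W(x_* )\}$, $V_{k_0+1},\dots,V_{i_0}\in\eta(x_* )$, $V_{i_0+1},\dots,V_p\in n_A(x_* )$ such that $\operatorname{rank}([V_1,\dots,V_p])=p-1$ and $\sum_{i=1}^p\beta_iV_i=0$ for some $\beta_i>0$, $i=1,\dots,p$. Furthermore, a collection $\{V_1,\dots,V_p\}$ of vectors of this form is a $p$-point alternance at $x_*$ if and only if $\operatorname{rank}([V_1,\dots,V_p])=p-1$ and $\sum_{i=1}^p\beta_iV_i=0$ for some $\beta_i>0$.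
   Context: Setting: $A\subseteq\mathbb{R}^d$ nonempty closed convex; $Y$ real Banach space with dual $Y^*$, pairing $\langle\cdot,\cdot\rangle$; $K\subset Y$ nonempty closed convex cone; $W$ compact Hausdorff; $f:\mathbb{R}^d\times W\to\mathbb{R}$ differentiable in $x$ with $f,\nabla_xf$ jointly continuous; $G:\mathbb{R}^d\to Y$ continuously Fréchet differentiable. $F(x)=\max_\omega f(x,\omega)$, $W(x)=\{\omega:f(x,\omega)=F(x)\}$; problem $(\mathcal{P})$: minimise $F$ s.t. $G(x)\in K$, $x\in A$. $K^*=\{y^*:\langle y^*,y\rangle\le0\ \forall y\in K\}$; $\mathcal{N}(x)=\{[DG(x)]^*\lambda:\lambda\in K^*,\langle\lambda,G(x)\rangle=0\}$ where $[DG(x)]^*\lambda\in\mathbb{R}^d$ satisfies $\langle[DG(x)]^*\lambda,h\rangle=\langle\lambda,DG(x)h\rangle$; $N_A(x)$ is the normal cone of convex analysis to $A$ at $x$. Fix $Z\subset\mathbb{R}^d$ consisting of $d$ linearly independent vectors, and sets $\eta(x_* )\subseteq\mathcal{N}(x_* )$, $n_A(x_* )\subseteq N_A(x_* )$ whose convex conic hulls are $\mathcal{N}(x_* )$ and $N_A(x_* )$. A $p$-point alternance exists at $x_*$ if there exist $k_0\in\{1,\dots,p\}$, $i_0\in\{k_0,\dots,p\}$, vectors $V_1,\dots,V_{k_0}\in\{\nabla_xf(x_*,\omega):\omega\in W(x_* )\}$, $V_{k_0+1},\dots,V_{i_0}\in\eta(x_* )$, $V_{i_0+1},\dots,V_p\in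 n_A(x_* )$ (ranges with upper index less than lower index are empty), and $V_{p+1},\dots,V_{d+1}\in Z$ such that the determinants $\Delta_s=\det[V_1,\dots,V_{s-1},V_{s+1},\dots,V_{d+1}]$ satisfy $\Delta_s\ne0$ for $s\le p$, $\operatorname{sign}\Delta_s=-\operatorname{sign}\Delta_{s+1}$ for $s\le p-1$, and $\Delta_s=0$ for $s\in\{p+1,\dots,d+1\}$; the collection $\{V_1,\dots,V_p\}$ is then called a $p$-point alternance at $x_*$. *)

From HB Require Import structures.
From mathcomp Require Import all_boot all_order all_algebra.
From mathcomp Require Import all_classical all_reals all_analysis.
Set Implicit Arguments. Unset Strict Implicit. Unset Printing Implicit Defensive.
Import Order.TTheory GRing.Theory Num.Theory.
Import numFieldNormedType.Exports.
Local Open Scope classical_set_scope.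
Local Open Scope ring_scope.

Section Defs.
Variable R : realType.
Variable d : nat.

Definition dot (u v : 'rV[R]_d) : R := \sum_(i < d) u 0 i * v 0 i.

Definition evec (i : 'I_d) : 'rV[R]_d := delta_mx 0 i.

Definition convexS (V : lmodType R) (S : set V) :=
  forall a b (t : R), S a -> S b -> 0 <= t <= 1 -> S (t *: a + (1 - t) *: b).

Definition closed_convex_cone (Y : normedModType R) (K : set Y) :=
  K !=set0 /\ closed K /\ convexS K /\
  (forall (t : R) y, 0 <= t -> K y -> K (t *: y)).

Definition gradx (W : Type) (f : 'rV[R]_d -> W -> R) (x : 'rV[R]_d) (w : W)
  : 'rV[R]_d := \row_i ('d (fun y => f y w) x (evec i)).

Definition Fmax (W : Type) (f : 'rV[R]_d -> W -> R) (x : 'rV[R]_d) : R :=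
  sup (range (f x)).
Definition Wact (W : Type) (f : 'rV[R]_d -> W -> R) (x : 'rV[R]_d) : set W :=
  [set w | f x w = Fmax f x].

Definition is_dual (Y : normedModType R) (lam : Y -> R) :=
  (forall (a : R) (u v : Y), lam (a *: u + v) = a * lam u + lam v) /\
  continuous lam.

(* K^* (negative polar cone, as in the paper) *)
Definition Kstar (Y : normedModType R) (K : set Y) : set (Y -> R) :=
  [set lam | is_dual lam /\ forall y, K y -> lam y <= 0].

(* [DG(x)]^* lam, characterised by <[DG(x)]^* lam, h> = <lam, DG(x) h> *)
Definition adjDG (Y : normedModType R) (G : 'rV[R]_d -> Y) (x : 'rV[R]_d)
  (lam : Y -> R) : 'rV[R]_d := \row_i lam ('d G x (evec i)).

Definition Ncal (Y : normedModType R) (G : 'rV[R]_d -> Y) (K : set Y)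
  (x : 'rV[R]_d) : set 'rV[R]_d :=
  [set v | exists lam, Kstar K lam /\ lam (G x) = 0 /\ v = adjDG G x lam].

Definition NA (A : set 'rV[R]_d) (x : 'rV[R]_d) : set 'rV[R]_d :=
  [set v | forall a, A a -> dot v (a - x) <= 0].

(* convex conic hull: all finite nonnegative combinations (0 included) *)
Definition conic_hull (S : set 'rV[R]_d) : set 'rV[R]_d :=
  [set v | exists (n : nat) (c : 'I_n -> R) (s : 'I_n -> 'rV[R]_d),
     (forall i, 0 <= c i) /\ (forall i, S (s i)) /\ v = \sum_(i < n) c i *: s i].

(* Delta_s = det [V_1,...,V_{s-1},V_{s+1},...,V_{d+1}]  (1-based indices;
   the vectors are taken as rows, which does not change the determinant) *)
Definition Delta (V : nat -> 'rV[R]_d) (s : nat) : R :=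
  \det (\matrix_(j < d, k < d) V (if (j.+1 < s)%N then j.+1 else j.+2) 0 k).

Definition of_form (S1 S2 S3 : set 'rV[R]_d) (p k0 i0 : nat)
  (V : nat -> 'rV[R]_d) :=
  [/\ (1 <= k0 <= p)%N, (k0 <= i0 <= p)%N,
      (forall t, (1 <= t <= k0)%N -> S1 (V t)),
      (forall t, (k0 < t <= i0)%N -> S2 (V t)) &
      (forall t, (i0 < t <= p)%N -> S3 (V t))].

(* V_1..V_p can be completed by V_{p+1},...,V_{d+1} in Z so that the
   determinant conditions of the alternance hold *)
Definition alternance_dets (Z : 'I_d -> 'rV[R]_d) (p : nat)
  (V : nat -> 'rV[R]_d) :=
  exists V' : nat -> 'rV[R]_d,
    [/\ (forall t, (1 <= t <= p)%N -> V' t = V t),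
        (forall t, (p < t <= d.+1)%N -> exists j, V' t = Z j),
        (forall s, (1 <= s <= p)%N -> Delta V' s != 0),
        (forall s, (1 <= s <= p.-1)%N ->
            Num.sg (Delta V' s) = - Num.sg (Delta V' s.+1)) &
        (forall s, (p < s <= d.+1)%N -> Delta V' s = 0)].

Definition rank_pos_comb (p : nat) (V : nat -> 'rV[R]_d) :=
  \rank (\matrix_(i < p, k < d) V i.+1 0 k) = p.-1 /\
  exists beta : nat -> R,
    (forall i, (1 <= i <= p)%N -> 0 < beta i) /\
    \sum_(1 <= i < p.+1) beta i *: V i = 0.

End Defs.

From HB Require Import structures.
From mathcomp Require Import all_boot all_order all_algebra.
From mathcomp Require Import all_classical all_reals all_analysis.
From mathcomp Require Import zify.
Set Implicit Arguments. Unset Strict Implicit. Unset Printing Implicit Defensive.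
Import Order.TTheory GRing.Theory Num.Theory.
Import numFieldNormedType.Exports.
Local Open Scope classical_set_scope.
Local Open Scope ring_scope.

(** Write M for the (d+1) x d matrix with rows V_1, ..., V_(d+1), so that
   Delta_s is the minor of M obtained by deleting row s.  Cramer's rule for
   the d+1 rows of M reads  sum_s (-1)^(s-1) Delta_s V_s = 0.  If the minors
   vanish beyond p and alternate in sign up to p, this is a positive
   combination of V_1, ..., V_p, and Delta_1 <> 0 makes V_2, ..., V_p
   independent, whence rank p - 1.  Conversely, if V_1, ..., V_p have rank
   p - 1 and a positive dependence beta, complete them by vectors of the basis
   Z to d+1 vectors spanning R^d.  Each V_s, s <= p, lies in the span of the
   other rows, so Delta_s <> 0; for s > p the minor contains the dependent
   V_1, ..., V_p, so Delta_s = 0; and the Cramer coefficients lie in the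
   one-dimensional kernel spanned by beta, so they alternate in sign. *)

Section SignedMinors.
Variable R : comRingType.

Lemma sum_signed_minors_row_eq0 n (M : 'M[R]_(n.+1, n)) :
  \sum_(i < n.+1) ((-1) ^+ i * \det (row' i M)) *: row i M = 0.
Proof.
apply/rowP => k; rewrite summxE [RHS]mxE.
(* Column k of M, put in front of M, gives a square matrix with two equal
   columns; expand its determinant along the first column. *)
pose N : 'M[R]_n.+1 := \matrix_(i, j) oapp (M i) (M i k) (unlift ord0 j).
have col'N : col' ord0 N = M by apply/matrixP => i j; rewrite !mxE liftK.
have detN : \det N = 0.
  rewrite -det_tr; apply: (@determinant_alternate _ _ _ ord0 (lift ord0 k)).
    exact: neq_lift.
  by move=> i; rewrite !mxE liftK unlift_none.
rewrite -[RHS]detN (expand_det_col N ord0); apply: eq_bigr => i _.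
by rewrite /cofactor col'N !mxE unlift_none addn0 mulrC.
Qed.

End SignedMinors.

Section RowSpaces.
Variable F : fieldType.

Lemma row'_sub_ker m n (M : 'M[F]_(m.+1, n)) (c : 'rV_m.+1) i :
  c *m M = 0 -> c 0 i != 0 -> (M <= row' i M)%MS.
Proof.
move=> cM0 ci0; apply/row_subP => j.
case: (unliftP i j) => [j' ->|->]; first by rewrite -row_rowsub row_sub.
move: cM0; rewrite mulmx_sum_row (bigD1_ord i) //=.
move=> /(canRL (addrK _))/(canRL (scalerK ci0)) ->.
rewrite sub0r scalerN -scaleNr scalemx_sub // summx_sub // => l _.
by rewrite scalemx_sub // -row_rowsub row_sub.
Qed.

Lemma det_row'_neq0 n (M : 'M[F]_(n.+1, n)) (c : 'rV_n.+1) i :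
  row_full M -> c *m M = 0 -> c 0 i != 0 -> \det (row' i M) != 0.
Proof.
move=> fullM cM0 ci0.
rewrite -unitfE -unitmxE -row_full_unit -sub1mx.
by rewrite (submx_trans _ (row'_sub_ker cM0 ci0)) ?sub1mx.
Qed.

Lemma rank_lt_rows_ker m n (A : 'M[F]_(m, n)) (u : 'rV_m) :
  u != 0 -> u *m A = 0 -> (\rank A < m)%N.
Proof.
move=> u0 uA0; rewrite ltn_neqAle rank_leq_row andbT.
by apply: contra u0 => freeA; rewrite -(mulmx_free_eq0 _ freeA) uA0.
Qed.

Lemma ker_rank_pred_colinear m n (A : 'M[F]_(m, n)) (u v : 'rV_m) :
  \rank A = m.-1 -> u != 0 -> u *m A = 0 -> v *m A = 0 ->
  exists a, v = a *: u.
Proof.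
move=> rkA u0 uA0 vA0; apply/sub_rVP.
have rku : \rank u = 1%N by rewrite rank_rV u0.
have m_gt0 : (0 < m)%N by rewrite -rku rank_leq_col.
have uker : (u <= kermx A)%MS by apply/sub_kermxP.
have /eqmxP -> : (u == kermx A)%MS.
  rewrite -(mxrank_leqif_eq uker) rku mxrank_ker rkA.
  by apply/eqP; lia.
exact/sub_kermxP.
Qed.

Lemma row_free_rowsub k m n (f : 'I_k -> 'I_m) (A : 'M[F]_(m, n)) :
  injective f -> row_free A -> row_free (rowsub f A).
Proof.
move=> f_inj freeA; apply: inj_row_free => v vfA0.
have /eqP : (v *m rowsub f 1%:M) *m A = 0 by rewrite -mulmxA -rowsubE.
rewrite mulmx_free_eq0 // => /eqP/rowP vf0; apply/rowP => i.
have := vf0 (f i); rewrite !mxE (bigD1 i) //= big1 => [|j ji].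
  by rewrite !mxE eqxx mulr1 addr0.
by rewrite !mxE (inj_eq f_inj) (negbTE ji) mulr0.
Qed.

Lemma rank_adds_genmx_row n m (A : 'M[F]_(m, n)) (z : 'rV_n) :
  ~~ (z <= A)%MS -> \rank (<<z>> + A)%MS = (\rank A).+1.
Proof.
move=> zA; have z_zA : (z <= <<z>> + A)%MS.
  by rewrite (submx_trans _ (addsmxSl _ A)) ?genmxE.
have lt_A_zA : (\rank A < \rank (<<z>> + A))%N.
  rewrite (ltn_leqif (mxrank_leqif_sup (addsmxSr _ A))).
  by apply: contra zA => /(submx_trans z_zA).
have := mxrank_adds_leqif <<z>>%MS A; rewrite genmxE.
by have := rank_leq_row z; case=> ? [? _]; lia.
Qed.

Lemma extend_by_rows (I : eqType) m n (U : 'M[F]_(m, n)) (Z : I -> 'rV_n)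
    (l : seq I) :
  exists J : seq I,
    \rank (U + \sum_(j <- J) <<Z j>>)%MS = (\rank U + size J)%N /\
    {in l, forall j, (Z j <= U + \sum_(i <- J) <<Z i>>)%MS}.
Proof.
elim: l => [|z l [J [rkJ spanJ]]].
  by exists [::]; rewrite big_nil addsmx0 addn0.
have [zJ | zJ] := boolP (Z z <= U + \sum_(j <- J) <<Z j>>)%MS.
  by exists J; split => // j; rewrite inE => /predU1P[-> | /spanJ].
exists (z :: J); rewrite big_cons addsmxA (addsmxC U) -addsmxA.
split; first by rewrite rank_adds_genmx_row // rkJ addnS.
move=> j; rewrite inE => /predU1P[-> | /spanJ lJ].
  by rewrite (submx_trans _ (addsmxSl _ _)) ?genmxE.
exact: submx_trans lJ (addsmxSr _ _).
Qed.

End RowSpaces.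

Section SignAlternation.
Variable R : realDomainType.

Lemma sg_signed_alternating (a : nat -> R) n :
  (forall i, (i.+1 < n)%N -> Num.sg (a i) = - Num.sg (a i.+1)) ->
  forall i, (i < n)%N -> Num.sg ((-1) ^+ i * a i) = Num.sg (a 0%N).
Proof.
move=> alt; elim=> [|i IH] lt_i1n; first by rewrite mul1r.
rewrite exprS mulN1r mulNr sgrN -IH ?(ltnW lt_i1n) //.
by rewrite !sgrM (alt i lt_i1n) mulrN.
Qed.

Lemma alternating_of_signed_multiple (a b : nat -> R) (lam : R) n :
  (forall i, (i < n)%N -> 0 < b i) ->
  (forall i, (i < n)%N -> (-1) ^+ i * a i = lam * b i) ->
  forall i, (i.+1 < n)%N -> Num.sg (a i) = - Num.sg (a i.+1).
Proof.
move=> b_gt0 abE i lt_i1n; have lt_in := ltnW lt_i1n.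
have aE j : (j < n)%N -> a j = (-1) ^+ j * (lam * b j).
  by move=> lt_jn; rewrite -abE // signrMK.
rewrite !aE // exprS mulN1r mulNr sgrN opprK !sgrM.
by rewrite (gtr0_sg (b_gt0 _ lt_in)) (gtr0_sg (b_gt0 _ lt_i1n)).
Qed.

End SignAlternation.

Section Alternance.
Variables (R : realType) (d : nat).
Implicit Types (V : nat -> 'rV[R]_d) (p : nat).

(* Row i of [rows_mx n V] is V_(i+1): the paper's indices start at 1. *)
Definition rows_mx n V : 'M[R]_(n, d) := \matrix_(i < n, k < d) V i.+1 0 k.

Definition alternating_Deltas p V :=
  [/\ forall s, (1 <= s <= p)%N -> Delta V s != 0,
      forall s, (1 <= s <= p.-1)%N ->
        Num.sg (Delta V s) = - Num.sg (Delta V s.+1) &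
      forall s, (p < s <= d.+1)%N -> Delta V s = 0].

Lemma row_rows_mx n V i : row i (rows_mx n V) = V i.+1.
Proof. by apply/rowP => k; rewrite !mxE. Qed.

Lemma Delta_row' V (i : 'I_d.+1) :
  Delta V i.+1 = \det (row' i (rows_mx d.+1 V)).
Proof.
congr (\det _); apply/matrixP => j k; rewrite !mxE /= /bump ltnS.
by case: leqP.
Qed.

Lemma mulmx_rows_mx n V (c : nat -> R) :
  (\row_(i < n) c i) *m rows_mx n V = \sum_(i < n) c i *: V i.+1.
Proof.
by rewrite mulmx_sum_row; apply: eq_bigr => i _; rewrite row_rows_mx mxE.
Qed.

Lemma mulmx_prefix_row n p (N : 'M[R]_(n, d)) V (c : nat -> R) :
  (p <= n)%N -> (forall j : 'I_n, (j < p)%N -> row j N = V j.+1) ->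
  (\row_(j < n) if (j < p)%N then c j else 0) *m N =
  \sum_(i < p) c i *: V i.+1.
Proof.
move=> le_pn rowN; rewrite mulmx_sum_row.
rewrite (big_ord_widen n (fun i => c i *: V i.+1) le_pn) [RHS]big_mkcond /=.
apply: eq_bigr => j _; rewrite mxE.
by case: ifP => [/rowN -> | _]; rewrite ?scale0r.
Qed.

Lemma sum_signed_Delta_eq0 p V :
  (p <= d.+1)%N -> (forall s, (p < s <= d.+1)%N -> Delta V s = 0) ->
  \sum_(i < p) ((-1) ^+ i * Delta V i.+1) *: V i.+1 = 0.
Proof.
move=> le_pd Delta0; have := sum_signed_minors_row_eq0 (rows_mx d.+1 V).
rewrite (bigID (fun i : 'I_d.+1 => (i < p)%N)) /= [X in _ + X]big1 ?addr0.
  move=> sum0; pose F i := ((-1) ^+ i * Delta V i.+1) *: V i.+1.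
  rewrite -[RHS]sum0 (big_ord_widen d.+1 F le_pd).
  by apply: eq_bigr => i _; rewrite -Delta_row' row_rows_mx.
move=> i le_pi; rewrite -Delta_row' Delta0 ?mulr0 ?scale0r //.
by have := ltn_ord i; lia.
Qed.

Lemma eq_rank_pos_comb p V V' :
  (forall t, (1 <= t <= p)%N -> V' t = V t) ->
  rank_pos_comb p V' <-> rank_pos_comb p V.
Proof.
move=> VV'; rewrite /rank_pos_comb -!/(rows_mx p _).
have -> : rows_mx p V' = rows_mx p V.
  by apply/matrixP => i k; rewrite !mxE VV' //= ltn_ord.
have sumE (b : nat -> R) :
    \sum_(1 <= i < p.+1) b i *: V' i = \sum_(1 <= i < p.+1) b i *: V i.
  rewrite !big_nat; apply: eq_bigr => i /andP[i_ge1 i_le].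
  by rewrite VV' ?i_ge1.
by split=> -[rk [b [b_gt0 comb]]]; split=> //; exists b; rewrite ?sumE // -sumE.
Qed.

Lemma rank_rows_mx_ge p V :
  (1 <= p <= d.+1)%N -> Delta V 1 != 0 -> (p.-1 <= \rank (rows_mx p V))%N.
Proof.
move=> /andP[p_gt0 le_pd] Delta1; have le_p1d : (p.-1 <= d)%N by lia.
pose Q := rowsub (widen_ord le_p1d) (row' ord0 (rows_mx d.+1 V)).
have freeQ : row_free Q.
  apply: row_free_rowsub; first by move=> i j /(congr1 val) ij; apply/val_inj.
  by rewrite row_free_unit unitmxE unitfE -Delta_row'.
rewrite -(eqP freeQ); apply: mxrankS; apply/row_subP => r.
have lt_r1p : (r.+1 < p)%N by have := ltn_ord r; lia.
have -> : row r Q = row (Ordinal lt_r1p) (rows_mx p V).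
  by rewrite row_rowsub row'Esub row_rowsub !row_rows_mx.
exact: row_sub.
Qed.

Lemma rank_pos_comb_of_alternating p V :
  (1 <= p <= d.+1)%N -> alternating_Deltas p V -> rank_pos_comb p V.
Proof.
move=> p_range [Delta_nz Delta_alt Delta0]; have /andP[p_gt0 le_pd] := p_range.
pose g i := (-1) ^+ i * Delta V i.+1.
have sg_g i : (i < p)%N -> Num.sg (g i) = Num.sg (Delta V 1).
  apply: (@sg_signed_alternating _ (fun i => Delta V i.+1) p _ i) => j lt_j1p.
  by apply: Delta_alt; lia.
have absE i : (i < p)%N -> `|Delta V i.+1| = Num.sg (Delta V 1) * g i.
  move=> lt_ip; rewrite -(sg_g i lt_ip) -normrEsg normrM normrX normrN1.
  by rewrite expr1n mul1r.
have comb : \sum_(i < p) `|Delta V i.+1| *: V i.+1 = 0.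
  under eq_bigr => i _ do rewrite absE // -scalerA.
  by rewrite -scaler_sumr sum_signed_Delta_eq0 ?scaler0.
split; last first.
  exists (fun t => `|Delta V t|); rewrite big_add1 big_mkord.
  by split=> // t /Delta_nz; rewrite normr_gt0.
change (\rank (rows_mx p V) = p.-1).
have uP : (\row_(i < p) `|Delta V i.+1|) *m rows_mx p V = 0.
  by rewrite (mulmx_rows_mx p V (fun i => `|Delta V i.+1|)).
have u0 : (\row_(i < p) `|Delta V i.+1|) != 0.
  by apply/rV0Pn; exists (Ordinal p_gt0); rewrite mxE normr_eq0 Delta_nz.
have := rank_lt_rows_ker u0 uP.
by have := rank_rows_mx_ge p_range (Delta_nz 1%N p_gt0); lia.
Qed.

Lemma Delta_eq0_of_dependent p V (b : nat -> R) :
  (0 < p)%N -> b 1%N != 0 -> \sum_(i < p) b i.+1 *: V i.+1 = 0 ->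
  forall s, (p < s <= d.+1)%N -> Delta V s = 0.
Proof.
move=> p_gt0 b1 comb [//|s] /andP[lt_ps le_sd].
have le_pd : (p <= d)%N by lia.
have d_gt0 : (0 < d)%N by lia.
rewrite (Delta_row' V (Ordinal le_sd)); apply/eqP/det0P.
exists (\row_(j < d) if (j < p)%N then b j.+1 else 0).
  by apply/rV0Pn; exists (Ordinal d_gt0); rewrite mxE /= p_gt0.
rewrite (mulmx_prefix_row (V := V) (fun j => b j.+1) le_pd) => [|j lt_jp].
  exact: comb.
by rewrite row'Esub row_rowsub row_rows_mx /= /bump leqNgt (leq_trans lt_jp).
Qed.

Lemma Delta_neq0_of_dependent p V (b : nat -> R) :
  (p <= d.+1)%N -> row_full (rows_mx d.+1 V) ->
  \sum_(i < p) b i.+1 *: V i.+1 = 0 ->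
  forall s, (1 <= s <= p)%N -> b s != 0 -> Delta V s != 0.
Proof.
move=> le_pd fullM comb [//|s] /andP[_ lt_sp] bs.
have lt_sd : (s < d.+1)%N by lia.
rewrite (Delta_row' V (Ordinal lt_sd)).
apply: (det_row'_neq0 (c := \row_(j < d.+1) if (j < p)%N then b j.+1 else 0)).
- exact: fullM.
- rewrite (mulmx_prefix_row (V := V) (fun j => b j.+1) le_pd) => [|j _].
    exact: comb.
  by rewrite row_rows_mx.
- by rewrite mxE /= lt_sp.
Qed.

Lemma alternating_of_rank_pos_comb p V :
  (1 <= p <= d.+1)%N -> row_full (rows_mx d.+1 V) -> rank_pos_comb p V ->
  alternating_Deltas p V.
Proof.
move=> /andP[p_gt0 le_pd] fullM [rkP [b [b_gt0 comb]]].
rewrite big_add1 big_mkord /= in comb.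
have b_neq0 s : (1 <= s <= p)%N -> b s != 0 by move/b_gt0/lt0r_neq0.
have Delta0 := Delta_eq0_of_dependent p_gt0 (b_neq0 1%N p_gt0) comb.
split=> // [s s_range | s /andP[s_gt0 le_s1p]].
  exact: Delta_neq0_of_dependent le_pd fullM comb s s_range (b_neq0 s s_range).
have gP : (\row_(i < p) ((-1) ^+ i * Delta V i.+1)) *m rows_mx p V = 0.
  rewrite (mulmx_rows_mx p V (fun i => (-1) ^+ i * Delta V i.+1)).
  exact: sum_signed_Delta_eq0.
have bP : (\row_(i < p) b i.+1) *m rows_mx p V = 0.
  by rewrite (mulmx_rows_mx p V (fun i => b i.+1)).
have b0 : (\row_(i < p) b i.+1) != 0.
  by apply/rV0Pn; exists (Ordinal p_gt0); rewrite mxE b_neq0.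
have [lam /rowP glam] := ker_rank_pred_colinear rkP b0 bP gP.
rewrite -(prednK s_gt0).
apply: (@alternating_of_signed_multiple _ (fun i => Delta V i.+1)
  (fun i => b i.+1) lam p _ _ s.-1).
- by move=> i lt_ip; apply: b_gt0; lia.
- by move=> i lt_ip; have := glam (Ordinal lt_ip); rewrite !mxE.
- by lia.
Qed.

Lemma exists_full_completion (Z : 'I_d -> 'rV[R]_d) p V :
  row_free (\matrix_(j < d, k < d) Z j 0 k) -> (1 <= p <= d.+1)%N ->
  \rank (rows_mx p V) = p.-1 ->
  exists V',
    [/\ forall t, (1 <= t <= p)%N -> V' t = V t,
        forall t, (p < t <= d.+1)%N -> exists j, V' t = Z j &
        row_full (rows_mx d.+1 V')].
Proof.
move=> freeZ /andP[p_gt0 le_pd] rkP.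
have [J [rkJ spanJ]] := extend_by_rows (rows_mx p V) Z (enum 'I_d).
set S := (rows_mx p V + \sum_(j <- J) <<Z j>>)%MS in rkJ spanJ *.
have fullS : row_full S.
  have ZS : (\matrix_(j, k) Z j 0 k <= S)%MS.
    apply/row_subP => j; have -> : row j (\matrix_(j, k) Z j 0 k) = Z j.
      by apply/rowP => k; rewrite !mxE.
    by rewrite spanJ ?mem_enum.
  by rewrite -sub1mx (submx_trans _ ZS) // sub1mx row_full_unit -row_free_unit.
have sizeJ : size J = (d.+1 - p)%N.
  by move: fullS rkJ; rewrite /row_full rkP => /eqP ->; lia.
pose V' t := if (t <= p)%N then V t else nth 0 (map Z J) (t - p.+1).
have SM : (S <= rows_mx d.+1 V')%MS.
  rewrite addsmx_sub; apply/andP; split.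
    apply/row_subP => r.
    have -> : row r (rows_mx p V) = row (widen_ord le_pd r) (rows_mx d.+1 V').
      by rewrite !row_rows_mx /V' /= ltn_ord.
    exact: row_sub.
  rewrite big_seq; apply: (big_ind (fun A => A <= rows_mx d.+1 V')%MS).
  - exact: sub0mx.
  - by move=> A B AM BM; rewrite addsmx_sub AM.
  move=> j jJ; rewrite genmxE; have lt_jd : (p + index j J < d.+1)%N.
    by rewrite -index_mem in jJ; lia.
  have -> : Z j = row (Ordinal lt_jd) (rows_mx d.+1 V').
    rewrite row_rows_mx /V' /=.
    have -> : ((p + index j J).+1 <= p)%N = false by lia.
    by rewrite subSS addKn (nth_map j) ?nth_index ?index_mem.
  exact: row_sub.
exists V'; split.
- by move=> t /andP[_ le_tp]; rewrite /V' le_tp.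
- move=> t /andP[lt_pt le_td]; rewrite /V' leqNgt lt_pt /=.
  have /mapP[j _ ->] : nth 0 (map Z J) (t - p.+1) \in map Z J.
    by rewrite mem_nth // size_map sizeJ; lia.
  by exists j.
- by rewrite -sub1mx (submx_trans _ SM) ?sub1mx.
Qed.

Lemma alternance_dets_iff_rank_pos_comb (Z : 'I_d -> 'rV[R]_d) p V :
  row_free (\matrix_(j < d, k < d) Z j 0 k) -> (1 <= p <= d.+1)%N ->
  alternance_dets Z p V <-> rank_pos_comb p V.
Proof.
move=> freeZ p_range; split.
  move=> [V' [VV' _ Delta_nz Delta_alt Delta0]].
  by apply/(eq_rank_pos_comb VV')/rank_pos_comb_of_alternating.
move=> rpc; have [V' [VV' V'Z fullM]] :=
  exists_full_completion freeZ p_range rpc.1.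
have /(alternating_of_rank_pos_comb p_range fullM) [] :=
  proj2 (eq_rank_pos_comb VV') rpc.
by exists V'.
Qed.

End Alternance.

Theorem proposition1
  (R : realType) (d : nat)
  (A : set 'rV[R]_d)
  (Y : completeNormedModType R) (K : set Y)
  (W : topologicalType)
  (f : 'rV[R]_d -> W -> R) (G : 'rV[R]_d -> Y)
  (Z : 'I_d -> 'rV[R]_d)
  (xs : 'rV[R]_d) (eta nA : set 'rV[R]_d) (p : nat)
  (* standing assumptions *)
  (hA : [/\ A !=set0, closed A & convexS A])
  (hK : closed_convex_cone K)
  (hW : compact [set: W] /\ hausdorff_space W)
  (hfdiff : forall (x : 'rV[R]_d) (w : W), differentiable (fun y => f y w) x)
  (hfcont : continuous (fun q : 'rV[R]_d * W => f q.1 q.2))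
  (hgcont : continuous (fun q : 'rV[R]_d * W => gradx f q.1 q.2))
  (hGdiff : forall x : 'rV[R]_d, differentiable G x)
  (hGcont : forall h : 'rV[R]_d, continuous (fun x => 'd G x h))
  (hZ : row_free (\matrix_(j < d, k < d) Z j 0 k))
  (* xs is feasible *)
  (hfeas : K (G xs) /\ A xs)
  (* the sets eta and n_A at the point xs *)
  (heta : eta `<=` Ncal G K xs /\ conic_hull eta = Ncal G K xs)
  (hnA : nA `<=` NA A xs /\ conic_hull nA = NA A xs)
  (hp : (1 <= p <= d.+1)%N) :
  let S1 := [set v | exists2 w, Wact f xs w & v = gradx f xs w] in
  ((exists k0 i0 V, of_form S1 eta nA p k0 i0 V /\ alternance_dets Z p V)
   <-> (exists k0 i0 V, of_form S1 eta nA p k0 i0 V /\ rank_pos_comb p V))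
  /\
  (forall k0 i0 V, of_form S1 eta nA p k0 i0 V ->
     (alternance_dets Z p V <-> rank_pos_comb p V)).
Proof.
move=> S1; have key V := alternance_dets_iff_rank_pos_comb V hZ hp.
split; last by move=> k0 i0 V _; exact: key.
by split=> -[k0 [i0 [V [formV ?]]]]; exists k0, i0, V; split=> //; apply/key.
Qed.
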